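(* Let $\mathbb{S}=(S,\Sigma,\{\tau_a\mid a\in L\})$ be an LMP, let $\Sigma_0\subseteq\Sigma$ be a sub-$\sigma$-algebra with $\mathcal{R}(\Sigma_0)=\mathcal{R}^T(\Sigma_0)$, and put $R_0=\mathcal{R}(\Sigma_0)$. Then for every limit ordinal $\lambda$, $\Sigma_\lambda$ is a stable $\sigma$-algebra.
   Context: An LMP is a triple $(S,\Sigma,\{\tau_a\mid a\in L\})$ with $(S,\Sigma)$ a measurable space, $L$ countable, and each $\tau_a:S\times\Sigma\to[0,1]$ a Markov kernel (subprobability measure in the second argument, measurable in the first). For $R\subseteq S\times S$, $A$ is $R$-closed if $x\in A$, $xRs$ imply $s\in A$; $\Sigma(R)$ is the family of $R$-closed members of $\Sigma$. For $\Gamma\subseteq\mathcal{P}(S)$, $\mathcal{R}(\Gamma)=\{(s,t):\forall A\in\Gamma\,(s\in A\iff t\in A)\}$; for $\Lambda\subseteq\Sigma$, $\mathcal{R}^T(\Lambda)=\{(s,t):\forall a\in L\,\forall E\in\Lambda\ \tau_a(s,E)=\tau_a(t,E)\}$. $\mathcal{O}(R)=\mathcal{R}^T(\Sigma(R))$, $\mathcal{G}(\Lambda)=\Sigma(\mathcal{R}^T(\Lambda))$. Iterates: $R_{\alpha+1}=\mathcal{O}(R_\alpha)$, $R_\lambda=\bigcap_{\alpha<\lambda}R_\alpha$ for limit $\lambda$; $\Sigma_{\alpha+1}=\mathcal{G}(\Sigma_\alpha)$, $\Sigma_\lambda=\sigma(\bigcup_{\alpha<\lambda}\Sigma_\alpha)$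 for limit $\lambda$. A family $\Lambda\subseteq\Sigma$ is stable if for all $A\in\Lambda$, rational $r\in[0,1]$ and $a\in L$, $\{s:\tau_a(s,A)>r\}\in\Lambda$. *)

From HB Require Import structures.
From mathcomp Require Import all_boot all_order all_algebra.
From mathcomp Require Import all_classical all_reals all_analysis.
Set Implicit Arguments. Unset Strict Implicit. Unset Printing Implicit Defensive.
Import Order.TTheory GRing.Theory Num.Theory.
Local Open Scope classical_set_scope.
Local Open Scope ring_scope.

(* An LMP on the measurable space S (sigma-algebra = [measurable]) with a
   countable label set L: a family of subprobability (Markov) kernels. *)
Definition LMP (d : measure_display) (S : measurableType d) (R : realType)
  (L : countType) := L -> R.-spker S ~> S.

Section LMPdefs.
Context (d : measure_display) (S : measurableType d) (R : realType)
  (L : countType) (tau : LMP S R L).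

Definition rel_closed (Rel : S -> S -> Prop) (A : set S) : Prop :=
  forall x s, A x -> Rel x s -> A s.

Definition SigmaR (Rel : S -> S -> Prop) : set (set S) :=
  [set A | measurable A /\ rel_closed Rel A].

Definition RelOf (Gamma : set (set S)) : S -> S -> Prop :=
  fun s t => forall A, Gamma A -> (A s <-> A t).

Definition RelT (Lambda : set (set S)) : S -> S -> Prop :=
  fun s t => forall a E, Lambda E -> tau a s E = tau a t E.

Definition Oop (Rel : S -> S -> Prop) : S -> S -> Prop := RelT (SigmaR Rel).
Definition Gop (Lambda : set (set S)) : set (set S) := SigmaR (RelT Lambda).

Definition stable (Lambda : set (set S)) : Prop :=
  Lambda `<=` measurable /\
  forall (A : set S) (r : rat) (a : L), Lambda A -> 0 <= r <= 1 ->
    Lambda [set s | ((ratr r)%:E < tau a s A)%E].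

End LMPdefs.

(* Ordinal-indexed iterates.  The ordinals are represented by an arbitrary
   well-ordered index type (I, lt) with least element i0 (playing 0). *)
Definition strict_well_order (I : Type) (lt : I -> I -> Prop) : Prop :=
  (forall i, ~ lt i i) /\ (forall i j k, lt i j -> lt j k -> lt i k) /\
  (forall i j, lt i j \/ i = j \/ lt j i) /\ well_founded lt.

Definition is_succ (I : Type) (lt : I -> I -> Prop) (i j : I) : Prop :=
  lt i j /\ ~ (exists k, lt i k /\ lt k j).

Definition is_limit (I : Type) (lt : I -> I -> Prop) (l : I) : Prop :=
  (exists k, lt k l) /\ ~ (exists i, is_succ lt i l).

Definition sigma_iterates (d : measure_display) (S : measurableType d)
  (R : realType) (L : countType) (tau : LMP S R L)
  (Sigma0 : set (set S)) (I : Type) (lt : I -> I -> Prop) (i0 : I)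
  (F : I -> set (set S)) : Prop :=
  F i0 = Sigma0 /\
  (forall i j, is_succ lt i j -> F j = Gop tau (F i)) /\
  (forall l, is_limit lt l ->
     F l = <<s [set A | exists k, lt k l /\ F k A] >>).

From HB Require Import structures.
From mathcomp Require Import all_boot all_order all_algebra.
From mathcomp Require Import all_classical all_reals all_analysis.
From mathcomp Require Import measurable_realfun.
Local Open Scope classical_set_scope.

Set Implicit Arguments. Unset Strict Implicit. Unset Printing Implicit Defensive.
Import Order.TTheory GRing.Theory Num.Theory.

(* 1. G(Lambda) is always a sigma-algebra of measurable sets, G is monotone,
      and for B in Lambda every level set {s | tau_a(s,B) in Y} lies in
      G(Lambda), since R^T(Lambda)-related states give B the same mass.
   2. By well-founded induction, every stage Sigma_j is a sigma-algebra of
      measurable sets, the stages form an increasing chain, and every stage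
      is self-closed: Sigma_j is included in G(Sigma_j).  The hypothesis
      R(Sigma_0) = R^T(Sigma_0) is exactly self-closedness of Sigma_0.
   3. At a limit l, U = \bigcup_{k<l} Sigma_k is a pi-system generating
      Sigma_l.  For B in Sigma_k with k < l, the level sets of
      s |-> tau_a(s,B) lie in G(Sigma_k) = Sigma_{k+1}, a subset of U, and
      k+1 < l; so s |-> tau_a(s,B) is Sigma_l-measurable.
   4. The sets B whose kernel function is Sigma_l-measurable form a
      lambda-system, so by Dynkin's pi-lambda theorem this holds for all of
      Sigma_l, whence {s | tau_a(s,A) > r} is in Sigma_l for A in Sigma_l. *)

Section GOperator.
Context (d : measure_display) (S : measurableType d) (R : realType)
  (L : countType) (tau : LMP S R L).

Lemma RelT_sym (Lam : set (set S)) s t :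
  RelT tau Lam s t -> RelT tau Lam t s.
Proof. by move=> h a E HE; rewrite h. Qed.

(* The R-closed measurable sets of a symmetric relation form a sigma-algebra;
   R^T(Lambda) is symmetric, so G(Lambda) is one. *)
Lemma Gop_sigma_algebra (Lam : set (set S)) :
  sigma_algebra setT (Gop tau Lam).
Proof.
split.
- by split => // x s [].
- move=> A [mA cA]; split; first by rewrite setTD; exact: measurableC.
  move=> x s [_ nAx] xs; split => // As; apply: nAx.
  exact: cA s x As (RelT_sym xs).
- move=> A hA; split; first by apply: bigcup_measurable => n _; case: (hA n).
  by move=> x s [n _ Ax] xs; exists n => //; exact: (hA n).2 x s Ax xs.
Qed.

Lemma Gop_measurable (Lam : set (set S)) : Gop tau Lam `<=` measurable.
Proof. by move=> A []. Qed.

(* A larger Lambda gives a finer relation R^T(Lambda), hence more closed sets. *)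
Lemma Gop_monotone (Lam Lam' : set (set S)) :
  Lam `<=` Lam' -> Gop tau Lam `<=` Gop tau Lam'.
Proof.
move=> sub A [mA cA]; split => // x s Ax xs; apply: (cA x s Ax).
by move=> a E HE; apply: xs; exact: sub.
Qed.

Lemma Gop_kernel_preimage (Lam : set (set S)) (a : L) (B : set S)
    (Y : set (\bar R)) :
  Lam B -> measurable B -> measurable Y ->
  Gop tau Lam ((fun s => tau a s B) @^-1` Y).
Proof.
move=> LB mB mY; split.
  by have := measurable_kernel (tau a) B mB measurableT Y mY; rewrite setTI.
by move=> x s Yx xs; rewrite /preimage /= -(xs a B LB).
Qed.

Definition self_closed (Lam : set (set S)) : Prop := Lam `<=` Gop tau Lam.

Lemma self_closed_RelOf (Lam : set (set S)) :
  Lam `<=` measurable -> RelOf Lam = RelT tau Lam -> self_closed Lam.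
Proof.
move=> mLam hR A LA; split; first exact: mLam.
by move=> x s Ax; rewrite -hR => /(_ A LA) xs; apply/xs.
Qed.

Lemma self_closed_Gop (Lam : set (set S)) :
  self_closed Lam -> self_closed (Gop tau Lam).
Proof. by move=> scL; apply: Gop_monotone. Qed.

Lemma self_closed_gen (U : set (set S)) :
  self_closed U -> self_closed <<s U >>.
Proof.
move=> scU; apply: subset_trans (Gop_monotone (@sub_gen_smallest _ _ U)).
exact: smallest_sub (Gop_sigma_algebra U) scU.
Qed.

End GOperator.

Section KernelLambdaSystem.
Context (d : measure_display) (S : measurableType d) (R : realType)
  (k : R.-spker S ~> S) (G : set (set S)).

Definition kernel_measurable_sets : set (set S) :=
  [set B | measurable B /\
     measurable_fun (setT : set (g_sigma_algebraType G)) (fun s => k s B)].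

(* Complements and disjoint countable unions preserve kernel measurability,
   since k s (~` B) = k s setT - k s B is finite and k s is sigma-additive. *)
Lemma kernel_measurable_lambda_system :
  kernel_measurable_sets setT -> lambda_system setT kernel_measurable_sets.
Proof.
move=> kT; apply/dynkin_lambda_system; split => //.
- move=> B [mB mfB]; split; first exact: measurableC.
  have -> : (fun s : g_sigma_algebraType G => k s (~` B)) =
            (fun s => (k s setT - k s B)%E).
    apply/funext => s; rewrite -setTD measureD // ?setTI //.
    exact: le_lt_trans (sprob_kernel_le1 _ _) (ltry 1).
  exact: emeasurable_funB kT.2 mfB.
- move=> B tB hB; split; first by apply: bigcup_measurable => n _; exact: (hB n).1.
  apply: (emeasurable_fun_cvg
    (fun n (s : g_sigma_algebraType G) => (\sum_(0 <= i < n) k s (B i))%E)).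
  + by move=> n; apply: emeasurable_sum => i; exact: (hB i).2.
  + by move=> s _; apply: measure_sigma_additive => // i; exact: (hB i).1.
Qed.

Lemma kernel_measurable_gen :
  setI_closed G -> G setT -> G `<=` kernel_measurable_sets ->
  <<s G >> `<=` kernel_measurable_sets.
Proof.
move=> GI GT Gk.
have lambdaK := kernel_measurable_lambda_system (Gk _ GT).
by apply: (lambda_system_subset GI lambdaK Gk) => X _; exact: subsetT.
Qed.

End KernelLambdaSystem.

Lemma sigma_algebra_setI_closed (T : Type) (G : set (set T)) :
  sigma_algebra setT G -> setI_closed G.
Proof. by move/(sigma_algebraP (fun _ _ => subsetT _)) => [_ _ _]. Qed.

Section WellOrder.
Context (I : Type) (lt : I -> I -> Prop) (i0 : I).
Hypotheses (hwo : strict_well_order lt) (hi0 : forall i, ~ lt i i0).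

Lemma wf_minimal (P : I -> Prop) :
  (exists x, P x) -> exists m, P m /\ forall n, P n -> ~ lt n m.
Proof.
have [_ [_ [_ wf]]] := hwo.
move=> [x Px]; apply: contrapT => hn; move: Px; elim/(well_founded_ind wf): x.
move=> x IH Px; apply: hn; exists x; split => // n Pn ltnx.
exact: IH n ltnx Pn.
Qed.

Lemma index_cases j : j = i0 \/ (exists i, is_succ lt i j) \/ is_limit lt j.
Proof.
have [_ [_ [tri _]]] := hwo.
have [->|ji0] := pselect (j = i0); first by left.
right; have [h|nh] := pselect (exists i, is_succ lt i j); first by left.
right; split => //; exists i0.
by case: (tri i0 j) => [//|[e|h]]; [rewrite e in ji0|exfalso; exact: hi0 h].
Qed.

Lemma succ_below_limit k l :
  is_limit lt l -> lt k l -> exists m, is_succ lt k m /\ lt m l.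
Proof.
have [_ [_ [tri _]]] := hwo.
move=> [_ nsucc] lkl.
have [m [lkm minm]] := wf_minimal (ex_intro (fun m => lt k m) l lkl).
have skm : is_succ lt k m by split => // -[n [lkn lnm]]; exact: minm n lkn lnm.
exists m; split => //.
case: (tri m l) => [//|[e|llm]]; exfalso.
- by apply: nsucc; exists k; rewrite -e.
- exact: minm l lkl llm.
Qed.

End WellOrder.

Section Iterates.
Context (d : measure_display) (S : measurableType d) (R : realType)
  (L : countType) (tau : LMP S R L) (Sigma0 : set (set S)).
Hypotheses (hsig : sigma_algebra setT Sigma0) (hsub : Sigma0 `<=` measurable)
  (hR : RelOf Sigma0 = RelT tau Sigma0).
Context (I : Type) (lt : I -> I -> Prop) (i0 : I).
Hypotheses (hwo : strict_well_order lt) (hi0 : forall i, ~ lt i i0).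
Context (F : I -> set (set S)).
Hypothesis hF : sigma_iterates tau Sigma0 lt i0 F.

Definition good_stage (j : I) : Prop :=
  [/\ forall i, lt i j -> F i `<=` F j, self_closed tau (F j),
      F j `<=` measurable & sigma_algebra setT (F j)].

Lemma good_succ i j : is_succ lt i j -> (forall k, lt k j -> good_stage k) ->
  good_stage j.
Proof.
have [_ [_ [tri _]]] := hwo; have [_ [Fs _]] := hF.
move=> sij IH; have [lij nk] := sij.
have [IHchain IHclosed _ _] := IH i lij.
have FiFj : F i `<=` F j by rewrite (Fs _ _ sij); exact: IHclosed.
split; last 3 first.
- by rewrite (Fs _ _ sij); exact: self_closed_Gop.
- by rewrite (Fs _ _ sij); exact: Gop_measurable.
- by rewrite (Fs _ _ sij); exact: Gop_sigma_algebra.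
move=> k lkj; case: (tri k i) => [lki|[->|lik]] //.
- exact: subset_trans (IHchain k lki) FiFj.
- by exfalso; apply: nk; exists k.
Qed.

(* Limit step: the sigma-algebra generated by a self-closed union is
   self-closed (self_closed_gen). *)
Lemma good_limit l : is_limit lt l -> (forall k, lt k l -> good_stage k) ->
  good_stage l.
Proof.
have [_ [_ Fl]] := hF.
move=> hl IH; rewrite /good_stage (Fl _ hl); split.
- by move=> k lkl A Fk; apply: sub_gen_smallest; exists k.
- apply: self_closed_gen => A [k [lkl Fk]].
  have [_ closed _ _] := IH k lkl.
  apply: Gop_monotone (closed A Fk) => B FkB; exists k; split => //.
- by apply: smallest_sub; [exact: sigma_algebra_measurable|
    move=> A [k [lkl Fk]]; have [_ _ meas _] := IH k lkl; exact: meas].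
- exact: smallest_sigma_algebra.
Qed.

Lemma good_stages j : good_stage j.
Proof.
have [_ [_ [_ wf]]] := hwo; have [F0 _] := hF.
elim/(well_founded_ind wf): j => j IH.
case: (index_cases hwo hi0 j) => [->|[[i sij]|lj]].
- rewrite /good_stage F0.
  split; [by move=> i /hi0|exact: self_closed_RelOf|by []|by []].
- exact: good_succ sij IH.
- exact: good_limit lj IH.
Qed.

Section Limit.
Variable l : I.
Hypothesis hl : is_limit lt l.

Definition below_limit : set (set S) := [set A | exists k, lt k l /\ F k A].

(* The stages below l form a chain of sigma-algebras, so their union is a
   pi-system. *)
Lemma below_limit_setI_closed : setI_closed below_limit.
Proof.
have [_ [_ [tri _]]] := hwo.
move=> A B [k1 [l1 A1]] [k2 [l2 B2]].
have [chain1 _ _ sig1] := good_stages k1; have [chain2 _ _ sig2] := good_stages k2.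
case: (tri k1 k2) => [h|[e|h]].
- exists k2; split => //.
  exact: sigma_algebra_setI_closed sig2 _ _ (chain2 k1 h A A1) B2.
- subst k2; exists k1; split => //.
  exact: sigma_algebra_setI_closed sig1 _ _ A1 B2.
- exists k1; split => //.
  exact: sigma_algebra_setI_closed sig1 _ _ A1 (chain1 k2 h B B2).
Qed.

(* The first stage lies below l, so the whole space is in the union. *)
Lemma below_limit_setT : below_limit setT.
Proof.
have [_ [_ [tri _]]] := hwo; have [F0 _] := hF.
exists i0; split.
  case: (tri i0 l) => [//|[e|h]]; exfalso; last exact: hi0 h.
  by have [[k hk] _] := hl; rewrite -e in hk; exact: hi0 hk.
have [Sigma0_0 closedC _] := hsig.
by rewrite F0 -setC0 -setTD; exact: closedC Sigma0_0.
Qed.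

(* For B in F k with k < l, the level sets of s |-> tau_a(s,B) are in
   G(F k) = F (k+1), and k+1 < l. *)
Lemma below_limit_kernel_measurable (a : L) :
  below_limit `<=` kernel_measurable_sets (tau a) below_limit.
Proof.
have [_ [Fs _]] := hF.
move=> B [k [lkl FkB]].
have [_ _ meas _] := good_stages k; have mB := meas B FkB.
split => // _ Y mY; rewrite setTI.
have [m [skm lml]] := succ_below_limit hwo hl lkl.
apply: sub_gen_smallest; exists m; split => //; rewrite (Fs k m skm).
exact: Gop_kernel_preimage.
Qed.

(* By Dynkin, every kernel function of a set of F l is F l-measurable; its
   superlevel sets are therefore in F l. *)
Lemma limit_stable : stable tau (F l).
Proof.
have [_ [_ Fl]] := hF; have [_ _ meas _] := good_stages l.
split => // A r a FlA _.
have genK := kernel_measurable_gen below_limit_setI_closed below_limit_setT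
  (below_limit_kernel_measurable a).
have [_ mf] : kernel_measurable_sets (tau a) below_limit A.
  by apply: genK; rewrite /below_limit -(Fl l hl).
have := emeasurable_fun_o_infty measurableT mf (ratr r)%:E.
by rewrite setTI (Fl l hl).
Qed.

End Limit.
End Iterates.

Theorem theorem3p15 (d : measure_display) (S : measurableType d)
  (R : realType) (L : countType) (tau : LMP S R L)
  (Sigma0 : set (set S))
  (hsig : sigma_algebra setT Sigma0) (hsub : Sigma0 `<=` measurable)
  (hR : RelOf Sigma0 = RelT tau Sigma0)
  (I : Type) (lt : I -> I -> Prop) (i0 : I)
  (hwo : strict_well_order lt) (hi0 : forall i, ~ lt i i0)
  (F : I -> set (set S)) (hF : sigma_iterates tau Sigma0 lt i0 F) :
  forall l, is_limit lt l -> sigma_algebra setT (F l) /\ stable tau (F l).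
Proof.
move=> l hl; split.
- by have [_ _ _ sig] := good_stages hsig hsub hR hwo hi0 hF l.
- exact (limit_stable hsig hsub hR hwo hi0 hF hl).
Qed.
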